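(* Let $G$ be a connected graph with $|V(G)|\ge 3$ and $L(G)=2l(G)$, and let $F_L,F_l$ be maximum matchings of $G$ with $\nu(G\setminus F_L)=L(G)$ and $\nu(G\setminus F_l)=l(G)$. Then: (a) if $u\in V(F_l)\setminus V(F_L)$, then $\deg(u)\in\{1,2\}$; moreover, if $\deg(u)=2$, and $v,w$ are the two neighbours of $u$ with $(u,w)\in F_l$, then $\deg(w)=2$ and $(v,w)\in F_L$; (b) if $u\in V(F_L)\setminus V(F_l)$, then $\deg(u)\ge 2$.
   Context: Graphs are finite, undirected, without loops or multiple edges. $\nu(G)$ denotes the maximum size of a matching of $G$; a matching is maximum if it has $\nu(G)$ edges. For $F\subseteq E(G)$, $G\setminus F$ is the graph with vertex set $V(G)$ and edge set $E(G)\setminus F$, and $V(F)$ is the set of vertices incident to some edge of $F$. Define $L(G)=\max\{\nu(G\setminus F): F \text{ a maximum matching of } G\}$ and $l(G)=\min\{\nu(G\setminus F): F \text{ a maximum matching of } G\}$. *)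

(* A simple graph on a finite vertex type T is given by its
   edge set E : {set {set T}}, every edge being a 2-element vertex set. *)
From mathcomp Require Import all_boot.
Set Implicit Arguments. Unset Strict Implicit. Unset Printing Implicit Defensive.

Section Graphs.
Variable T : finType.

Definition is_simple_graph (E : {set {set T}}) : Prop :=
  forall f, f \in E -> #|f| = 2.

Definition adj (E : {set {set T}}) : rel T := fun x y => [set x; y] \in E.

Definition connected_graph (E : {set {set T}}) : Prop :=
  forall x y : T, connect (adj E) x y.

Definition deg (E : {set {set T}}) (u : T) : nat := #|[set v | [set u; v] \in E]|.

Definition Vof (F : {set {set T}}) : {set T} := \bigcup_(f in F) f.

Definition matching_in (E M : {set {set T}}) : bool :=
  (M \subset E) &&
  [forall f in M, forall g in M, (f != g) ==> [disjoint f & g]].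

Definition nu (E : {set {set T}}) : nat :=
  \max_(M : {set {set T}} | matching_in E M) #|M|.

Definition max_matching (E M : {set {set T}}) : bool :=
  matching_in E M && (#|M| == nu E).

Definition Lnu (E : {set {set T}}) : nat :=
  \max_(M : {set {set T}} | max_matching E M) nu (E :\: M).

(* l(G) = min over maximum matchings F of nu(G \ F); the default value #|T|
   is irrelevant since a maximum matching always exists and nu <= #|T|. *)
Definition lnu (E : {set {set T}}) : nat :=
  \big[minn/#|T|]_(M : {set {set T}} | max_matching E M) nu (E :\: M).

End Graphs.

From mathcomp Require Import all_boot zify.
Set Implicit Arguments. Unset Strict Implicit. Unset Printing Implicit Defensive.

(* Write B := F_l and X := F_L, and let M be a maximum matching of
   G \ X, so |M| = L = 2 l = 2 nu(G \ B).  Since M \ B and X \ B are matchings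
   of G \ B and |B \ X| = |X \ B|, counting forces B \ X = M :&: B and M \ B to
   be a maximum matching of G \ B (lemma [critical_split]).  Hence no edge of
   G \ B can join two vertices that are not covered by M \ B; in particular a
   vertex matched by an edge of M :&: B behaves like a blocked endpoint.
   The same holds for every maximum matching X' of G that M avoids, and such
   matchings are produced from X by the swap X - e + uv at a vertex u not
   covered by X (lemma [max_matching_swap]).  Combining these two facts gives
   the local structure at a vertex u covered by B but not by X, with B-edge uw:
   every other neighbour v of u is matched to w by X ([free_vertex_neighbour]),
   otherwise one finds an augmenting path of length 3 for B.  The degree bounds
   of the theorem follow ([deg_B_only_vertex], [B_partner_deg2]); part (b) is
   again a direct application of the maximality of M \ B ([deg_X_only_vertex]). *)

Section Matchings.
Variable T : finType.
Implicit Types (E M N X : {set {set T}}) (e f g : {set T}).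

Lemma matching_subset E M : matching_in E M -> M \subset E.
Proof. by case/andP. Qed.

Lemma matching_share E M f g x :
  matching_in E M -> f \in M -> g \in M -> x \in f -> x \in g -> f = g.
Proof.
case/andP=> _ /forallP hdisj fM gM xf xg; apply/eqP/negPn/negP => nfg.
have /implyP/(_ nfg) := implyP (forallP (implyP (hdisj f) fM) g) gM.
by move/disjointFr/(_ xf); rewrite xg.
Qed.

Lemma matchingP E M :
  M \subset E ->
  (forall f g x, f \in M -> g \in M -> x \in f -> x \in g -> f = g) ->
  matching_in E M.
Proof.
move=> sME hshare; apply/andP; split=> //.
apply/forallP=> f; apply/implyP=> fM; apply/forallP=> g; apply/implyP=> gM.
apply/implyP=> nfg; rewrite disjoint_subset; apply/subsetP=> x xf.
by rewrite !inE; apply/negP=> xg; rewrite (hshare f g x fM gM xf xg) eqxx in nfg.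
Qed.

Lemma matching_restrict E E' M M' :
  matching_in E M -> M' \subset M -> M' \subset E' -> matching_in E' M'.
Proof.
move=> hM sM'M sM'E'; apply: matchingP => // f g x fM gM.
exact: matching_share hM (subsetP sM'M _ fM) (subsetP sM'M _ gM).
Qed.

Lemma matching_setD E X M :
  matching_in (E :\: X) M <-> matching_in E M /\ [disjoint M & X].
Proof.
split=> [hM | [hM dMX]].
  have sMEX := matching_subset hM.
  split; first by apply: (matching_restrict hM) => //; apply: subset_trans sMEX (subsetDl _ _).
  rewrite disjoint_subset; apply/subsetP=> f /(subsetP sMEX).
  by rewrite !inE => /andP[].
apply: (matching_restrict hM) => //; apply/subsetP=> f fM.
by rewrite inE (disjointFr dMX fM) (subsetP (matching_subset hM) _ fM).
Qed.

Lemma in_Vof N f x : f \in N -> x \in f -> x \in Vof N.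
Proof. by move=> fN xf; apply/bigcupP; exists f. Qed.

Lemma VofP N x : x \in Vof N -> exists2 f, f \in N & x \in f.
Proof. by move/bigcupP. Qed.

Lemma Vof_subset N X : N \subset X -> Vof N \subset Vof X.
Proof.
move=> sNX; apply/subsetP=> x /VofP[f fN xf].
exact: in_Vof (subsetP sNX _ fN) xf.
Qed.

Lemma matching_uncover E X e v :
  matching_in E X -> e \in X -> v \in e -> v \notin Vof (X :\ e).
Proof.
move=> hX eX ve; apply/negP=> /VofP[f]; rewrite in_setD1 => /andP[nfe fX] vf.
by rewrite (matching_share hX fX eX vf ve) eqxx in nfe.
Qed.

Lemma matching_extend E N a b :
  matching_in E N -> [set a; b] \in E -> a \notin Vof N -> b \notin Vof N ->
  matching_in E ([set a; b] |: N) /\ #|[set a; b] |: N| = #|N|.+1.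
Proof.
move=> hN abE aN bN; have abN : [set a; b] \notin N.
  by apply: contra aN => abN; apply: in_Vof abN _; rewrite !inE eqxx.
rewrite cardsU1 abN; split=> //; apply: matchingP.
  by rewrite subUset sub1set abE matching_subset.
have fresh g y : g \in N -> y \in [set a; b] -> y \in g -> False.
  move=> gN; rewrite !inE => /orP[] /eqP-> yg.
  - by move/negP: aN; apply; apply: in_Vof gN yg.
  - by move/negP: bN; apply; apply: in_Vof gN yg.
move=> f g x /setU1P[->|fN] /setU1P[->|gN] xf xg //.
- by case: (fresh g x gN xf xg).
- by case: (fresh f x fN xg xf).
- exact: matching_share hN fN gN xf xg.
Qed.

Lemma nu_ge E M : matching_in E M -> #|M| <= nu E.
Proof. exact: (@leq_bigmax_cond _ (matching_in E) (fun M => #|M|) M). Qed.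

Lemma nu_attained E : exists M, max_matching E M.
Proof.
have h0 : matching_in E set0 by apply: matchingP => [|f g x]; rewrite ?sub0set ?inE.
have [|M hM eM] := eq_bigmax_cond (fun M : {set {set T}} => #|M|) (A := matching_in E).
  by apply/card_gt0P; exists set0.
by exists M; apply/andP; split; [exact: hM | rewrite /nu eM].
Qed.

Lemma max_matching_in E X : max_matching E X -> matching_in E X.
Proof. by case/andP. Qed.

Lemma max_matching_card E X : max_matching E X -> #|X| = nu E.
Proof. by case/andP=> _ /eqP. Qed.

Lemma max_matching_cover E X a b :
  max_matching E X -> [set a; b] \in E -> a \notin Vof X -> b \in Vof X.
Proof.
move=> hX abE aX; apply/negPn/negP=> bX.
have [hX' cardX'] := matching_extend (max_matching_in hX) abE aX bX.
by have := nu_ge hX'; rewrite cardX' (max_matching_card hX) ltnn.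
Qed.

Lemma max_matching_swap E X u v e :
  max_matching E X -> u \notin Vof X -> [set u; v] \in E -> e \in X -> v \in e ->
  max_matching E ([set u; v] |: (X :\ e)).
Proof.
move=> hX uX uvE eX ve; have mX := max_matching_in hX.
have sXeX : X :\ e \subset X := subsetDl _ _.
have hXe : matching_in E (X :\ e).
  exact: matching_restrict mX sXeX (subset_trans sXeX (matching_subset mX)).
have uXe : u \notin Vof (X :\ e).
  by apply: contra uX; apply: (subsetP (Vof_subset sXeX)).
have [hX' cardX'] := matching_extend hXe uvE uXe (matching_uncover mX eX ve).
by rewrite /max_matching hX' cardX' -(max_matching_card hX) (cardsD1 e X) eX add1n eqxx.
Qed.

Lemma Vof_setU1 N e x : (x \in Vof (e |: N)) = (x \in e) || (x \in Vof N).
Proof.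
apply/idP/orP=> [/VofP[f /setU1P[->|fN] xf] | [xe | /VofP[f fN xf]]].
- by left.
- by right; apply: in_Vof fN xf.
- exact: in_Vof (setU11 _ _) xe.
- exact: in_Vof (setU1r _ fN) xf.
Qed.

Lemma disjoint_swap M X e f :
  [disjoint M & X] -> e \notin M -> [disjoint M & e |: (X :\ f)].
Proof.
move=> dMX eM; rewrite disjoint_subset; apply/subsetP=> g gM.
rewrite inE in_setU1 in_setD1 (disjointFr dMX gM) andbF orbF.
by apply: contraNneq eM => <-.
Qed.

Lemma max_matching_no_path3 E B u v w z :
  max_matching E B -> [set u; w] \in B -> u != w ->
  v \notin Vof B -> z \notin Vof B -> v != z ->
  [set u; v] \in E -> [set w; z] \in E -> False.
Proof.
move=> hB uwB nuw vB zB nvz uvE wzE; have mB := max_matching_in hB.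
set B0 := B :\ [set u; w].
have sB0B : B0 \subset B := subsetDl _ _.
have VB0 := subsetP (Vof_subset sB0B).
have hB0 : matching_in E B0.
  exact: matching_restrict mB sB0B (subset_trans sB0B (matching_subset mB)).
have [hB1 cardB1] := matching_extend hB0 wzE
  (matching_uncover mB uwB (set22 _ _)) (contra (VB0 z) zB).
have uB1 : u \notin Vof ([set w; z] |: B0).
  rewrite Vof_setU1 negb_or in_set2 negb_or nuw.
  rewrite (matching_uncover mB uwB (set21 _ _)) andbT /=.
  by apply: contraNneq zB => <-; apply: in_Vof uwB (set21 _ _).
have vB1 : v \notin Vof ([set w; z] |: B0).
  rewrite Vof_setU1 negb_or in_set2 negb_or nvz (contra (VB0 v) vB) !andbT.
  by apply: contraNneq vB => ->; apply: in_Vof uwB (set22 _ _).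
have [hB2 cardB2] := matching_extend hB1 uvE uB1 vB1.
have := nu_ge hB2; rewrite cardB2 cardB1 -(max_matching_card hB).
by rewrite (cardsD1 [set u; w] B) uwB add1n ltnn.
Qed.

End Matchings.

Section SimpleGraphs.
Variable T : finType.
Implicit Types (X : {set {set T}}).

Lemma set2_inj (x a b : T) : [set x; a] = [set x; b] -> a = b.
Proof.
move=> e; have : a \in [set x; b] by rewrite -e !inE eqxx orbT.
rewrite in_set2 => /orP[/eqP ax|/eqP //].
have : b \in [set x; a] by rewrite e !inE eqxx orbT.
by rewrite in_set2 ax orbb => /eqP.
Qed.

Lemma matching_partner E X x a b :
  matching_in E X -> [set x; a] \in X -> [set x; b] \in X -> a = b.
Proof.
by move=> hX xa xb; apply: set2_inj; apply: matching_share hX xa xb (set21 _ _) (set21 _ _).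
Qed.

Lemma matching_partners_le1 E X x :
  matching_in E X -> #|[set v | [set v; x] \in X]| <= 1.
Proof.
move=> hX; apply/card_le1P=> a; rewrite inE => xa b; rewrite !inE.
apply/idP/eqP=> [xb|->//]; apply: (matching_partner (x := x) hX).
- by rewrite setUC.
- by rewrite setUC.
Qed.

Variable E : {set {set T}}.
Hypothesis hE : is_simple_graph E.

Lemma edge_form f u : f \in E -> u \in f -> exists v, f = [set u; v].
Proof.
move=> fE uf; have /eqP/cards2P[x [y [_ ef]]] := hE fE.
by move: uf; rewrite ef in_set2 => /orP[]/eqP->; [exists y | exists x; rewrite setUC].
Qed.

Lemma edge_neq u v : [set u; v] \in E -> u != v.
Proof. by move/hE; rewrite cards2; case: (u != v). Qed.

Lemma deg_gt0 u w : [set u; w] \in E -> 0 < deg E u.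
Proof. by move=> uwE; apply/card_gt0P; exists w; rewrite inE. Qed.

End SimpleGraphs.

(* B plays the role of F_l, M is a matching of size at least 2 nu(G \ B); the
   matchings X below play the role of F_L and of its swaps, all avoided by M. *)
Section ExtremalMatchings.
Variables (T : finType) (E B M : {set {set T}}).
Hypotheses (hE : is_simple_graph E) (hB : max_matching E B) (hM : matching_in E M).
Hypothesis hMbig : 2 * nu (E :\: B) <= #|M|.

(* Counting: M :&: B and M :\: B both have size nu(G \ B), and M :&: B = B \ X. *)
Lemma critical_split X :
  max_matching E X -> [disjoint M & X] ->
  B :\: X \subset M /\ max_matching (E :\: B) (M :\: B).
Proof.
move=> hX dMX; have mX := max_matching_in hX.
have hMB : matching_in (E :\: B) (M :\: B).
  exact: matching_restrict hM (subsetDl _ _) (setSD _ (matching_subset hM)).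
have hXB : matching_in (E :\: B) (X :\: B).
  exact: matching_restrict mX (subsetDl _ _) (setSD _ (matching_subset mX)).
have MB_le := nu_ge hMB; have XB_le := nu_ge hXB.
have BX_XB : #|B :\: X| = #|X :\: B|.
  have := cardsID X B; have := cardsID B X.
  by rewrite setIC (max_matching_card hB) (max_matching_card hX); lia.
have MIB_sub : M :&: B \subset B :\: X.
  by apply/subsetP=> f; rewrite !inE => /andP[fM ->]; rewrite (disjointFr dMX fM).
have := subset_leq_card MIB_sub; have := cardsID B M => splitM MIB_le.
have nu_le_MIB : nu (E :\: B) <= #|M :&: B|.
  rewrite -(leq_add2r (nu (E :\: B))) addnn -mul2n (leq_trans hMbig) //.
  by rewrite -splitM leq_add2l.
have MIB : M :&: B = B :\: X.
  by apply/eqP; rewrite eqEcard MIB_sub BX_XB (leq_trans XB_le).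
split; first by rewrite -MIB subsetIl.
rewrite /max_matching hMB eqn_leq MB_le -(leq_add2l #|M :&: B|) splitM.
by rewrite (leq_trans _ hMbig) // mul2n -addnn leq_add2r MIB BX_XB.
Qed.

Lemma B_edge_in_M X f :
  max_matching E X -> [disjoint M & X] -> f \in B -> f \notin X -> f \in M.
Proof.
move=> hX dMX fB fX; apply: (subsetP (critical_split hX dMX).1).
by rewrite inE fX fB.
Qed.

Lemma MB_uncovered f x : f \in M -> f \in B -> x \in f -> x \notin Vof (M :\: B).
Proof.
move=> fM fB xf; apply/negP=> /VofP[g]; rewrite inE => /andP[gB gM] xg.
by rewrite (matching_share hM gM fM xg xf) fB in gB.
Qed.

(* An edge ab of X outside B, whose end a is matched by M :&: B, has its other
   end b uncovered by B: otherwise M \ B could be extended by ab. *)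
Lemma other_end_B_free X a b f :
  max_matching E X -> [disjoint M & X] ->
  [set a; b] \in X -> [set a; b] \notin B ->
  f \in M -> f \in B -> a \in f -> b \notin Vof B.
Proof.
move=> hX dMX abX abB fM fB af; have mX := max_matching_in hX.
apply/negP=> /VofP[g gB bg].
have gX : g \notin X.
  by apply: contra abB => gX; rewrite -(matching_share mX gX abX bg (set22 _ _)).
have gM := B_edge_in_M hX dMX gB gX.
have abEB : [set a; b] \in E :\: B.
  by rewrite in_setD abB (subsetP (matching_subset mX) _ abX).
have := max_matching_cover (critical_split hX dMX).2 abEB (MB_uncovered fM fB af).
by rewrite (negbTE (MB_uncovered gM gB bg)).
Qed.

Lemma free_vertex_neighbour X u v w :
  max_matching E X -> [disjoint M & X] -> u \notin Vof X ->
  [set u; w] \in B -> v != w -> [set u; v] \in E -> [set v; w] \in X.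
Proof.
move=> hX dMX uX uwB nvw uvE; have mX := max_matching_in hX; have mB := max_matching_in hB.
have uwE := subsetP (matching_subset mB) _ uwB.
have uwM : [set u; w] \in M.
  by apply: B_edge_in_M hX dMX uwB _; apply: contra uX => h; apply: in_Vof h (set21 _ _).
have uvM : [set u; v] \notin M.
  by apply/negP=> uvM; move/eqP: nvw; apply; apply: matching_partner hM uvM uwM.
have uvB : [set u; v] \notin B.
  by apply/negP=> uvB; move/eqP: nvw; apply; apply: matching_partner mB uvB uwB.
have [ev evX vev] := VofP (max_matching_cover hX uvE uX).
have [ew ewX wew] := VofP (max_matching_cover hX uwE uX).
have [z ewz] := edge_form hE (subsetP (matching_subset mX) _ ewX) wew.
subst ew; clear wew.
have [evwz | nev] := eqVneq ev [set w; z].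
  by move: vev; rewrite evwz in_set2 (negbTE nvw) /= => /eqP ->; rewrite setUC.
(* Otherwise swap ev for uv; then v and z are both B-free: augmenting path. *)
have hX3 := max_matching_swap hX uX uvE evX vev.
have dMX3 := disjoint_swap ev dMX uvM.
have vB := other_end_B_free hX3 dMX3 (setU11 _ _) uvB uwM uwB (set21 _ _).
have wzX3 : [set w; z] \in [set u; v] |: (X :\ ev).
  by rewrite in_setU1 in_setD1 ewX andbT (eq_sym _ ev) nev orbT.
have wzB : [set w; z] \notin B.
  apply: contra uX => wzB; rewrite (matching_share mB wzB uwB (set21 _ _) (set22 _ _)) in ewX.
  exact: in_Vof ewX (set21 _ _).
have zB := other_end_B_free hX3 dMX3 wzX3 wzB uwM uwB (set22 _ _).
have nvz : v != z.
  by apply: contraNneq nev => vz; apply/eqP/(matching_share mX evX ewX vev); rewrite vz set22.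
case: (max_matching_no_path3 hB uwB (edge_neq hE uwE) vB zB nvz uvE
  (subsetP (matching_subset mX) _ ewX)).
Qed.

Lemma deg_B_only_vertex X u :
  max_matching E X -> [disjoint M & X] -> u \in Vof B -> u \notin Vof X ->
  deg E u = 1 \/ deg E u = 2.
Proof.
move=> hX dMX uB uX; have mB := max_matching_in hB.
have [f fB uf] := VofP uB.
have [w fuw] := edge_form hE (subsetP (matching_subset mB) _ fB) uf.
subst f; clear uf.
have nbrs : [set v | [set u; v] \in E] \subset w |: [set v | [set v; w] \in X].
  apply/subsetP=> v; rewrite !inE => uvE; have [-> | nvw] := eqVneq v w; first by [].
  by rewrite (free_vertex_neighbour hX dMX uX fB nvw uvE).
have := subset_leq_card nbrs; rewrite cardsU1.
have := matching_partners_le1 w (max_matching_in hX).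
have := deg_gt0 (subsetP (matching_subset mB) _ fB).
rewrite /deg; case: (w \notin _) => /=; lia.
Qed.

Lemma B_partner_deg2 X u v w :
  max_matching E X -> [disjoint M & X] -> u \notin Vof X ->
  [set u; w] \in B -> v != w -> [set u; v] \in E ->
  deg E w = 2 /\ [set v; w] \in X.
Proof.
move=> hX dMX uX uwB nvw uvE; have mX := max_matching_in hX; have mB := max_matching_in hB.
have vwX := free_vertex_neighbour hX dMX uX uwB nvw uvE.
split=> //.
have uwE := subsetP (matching_subset mB) _ uwB.
have uwM : [set u; w] \in M.
  by apply: B_edge_in_M hX dMX uwB _; apply: contra uX => h; apply: in_Vof h (set21 _ _).
have uvM : [set u; v] \notin M.
  by apply/negP=> uvM; move/eqP: nvw; apply; apply: matching_partner hM uvM uwM.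
(* In the swap X4 = X - vw + uv, the vertex w is free and u is matched to v. *)
set X4 := [set u; v] |: (X :\ [set v; w]).
have hX4 : max_matching E X4 := max_matching_swap hX uX uvE vwX (set21 _ _).
have dMX4 : [disjoint M & X4] := disjoint_swap _ dMX uvM.
have wX4 : w \notin Vof X4.
  rewrite Vof_setU1 negb_or in_set2 negb_or (matching_uncover mX vwX (set22 _ _)) andbT.
  by rewrite eq_sym (edge_neq hE uwE) eq_sym nvw.
have wuB : [set w; u] \in B by rewrite setUC.
have nbrs : [set r | [set w; r] \in E] = [set u; v].
  apply/setP=> r; rewrite !inE; apply/idP/idP => [wrE | /orP[] /eqP ->].
  - have [-> | nru] := eqVneq r u; first by [].
    have ruX4 := free_vertex_neighbour hX4 dMX4 wX4 wuB nru wrE.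
    rewrite setUC in ruX4.
    by rewrite (matching_partner (max_matching_in hX4) ruX4 (setU11 _ _)) eqxx orbT.
  - by rewrite setUC.
  - by rewrite setUC (subsetP (matching_subset mX) _ vwX).
by rewrite /deg nbrs cards2 (edge_neq hE uvE).
Qed.

(* Part (b): a vertex covered by X but not by B has two neighbours; if z were
   its only neighbour, M \ B could be extended by the edge uz. *)
Lemma deg_X_only_vertex X u :
  max_matching E X -> [disjoint M & X] -> u \in Vof X -> u \notin Vof B ->
  2 <= deg E u.
Proof.
move=> hX dMX uX uB; have mX := max_matching_in hX.
have [f fX uf] := VofP uX.
have [z fuz] := edge_form hE (subsetP (matching_subset mX) _ fX) uf.
subst f; clear uf.
have uzE := subsetP (matching_subset mX) _ fX.
have [/existsP[v /andP[uvE nvz]] | /existsPn only_z] :=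
  boolP [exists v, ([set u; v] \in E) && (v != z)].
  by apply/card_gt1P; exists z, v; rewrite !inE uzE uvE eq_sym nvz.
exfalso.
have [g gB zg] := VofP (max_matching_cover hB uzE uB).
have gX : g \notin X.
  apply: contra uB => gX; rewrite (matching_share mX gX fX zg (set22 _ _)) in gB.
  exact: in_Vof gB (set21 _ _).
have gM := B_edge_in_M hX dMX gB gX.
have uMB : u \notin Vof (M :\: B).
  apply/negP=> /VofP[h]; rewrite inE => /andP[_ hM'] uh.
  have [y hy] := edge_form hE (subsetP (matching_subset hM) _ hM') uh.
  have yz : y = z by move: (only_z y); rewrite -hy (subsetP (matching_subset hM) _ hM') negbK => /eqP.
  by move: (disjointFr dMX hM'); rewrite hy yz fX.
have uzEB : [set u; z] \in E :\: B.
  by rewrite in_setD uzE andbT; apply: contra uB => h; apply: in_Vof h (set21 _ _).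
have := max_matching_cover (critical_split hX dMX).2 uzEB uMB.
by rewrite (negbTE (MB_uncovered gM gB zg)).
Qed.

End ExtremalMatchings.

Theorem claim3 (T : finType) (E : {set {set T}})
  (hE : is_simple_graph E) (hconn : connected_graph E) (h3 : 3 <= #|T|)
  (hLl : Lnu E = 2 * lnu E)
  (FL Fl : {set {set T}})
  (hFL : max_matching E FL) (hFl : max_matching E Fl)
  (hFLnu : nu (E :\: FL) = Lnu E) (hFlnu : nu (E :\: Fl) = lnu E) :
  (forall u : T, u \in Vof Fl -> u \notin Vof FL ->
     (deg E u = 1 \/ deg E u = 2) /\
     (deg E u = 2 -> forall v w : T, v != w ->
        [set u; v] \in E -> [set u; w] \in E -> [set u; w] \in Fl ->
        deg E w = 2 /\ [set v; w] \in FL)) /\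
  (forall u : T, u \in Vof FL -> u \notin Vof Fl -> 2 <= deg E u).
Proof.
have [M hMmax] := nu_attained (E :\: FL).
have [hM dMFL] := (matching_setD _ _ _).1 (max_matching_in hMmax).
have hMbig : 2 * nu (E :\: Fl) <= #|M|.
  by rewrite (max_matching_card hMmax) hFLnu hLl hFlnu.
split=> [u uFl uFL | u uFL uFl].
- split; first exact: (deg_B_only_vertex hE hFl hM hMbig hFL dMFL uFl uFL).
  move=> _ v w nvw uvE _ uwFl.
  exact: (B_partner_deg2 hE hFl hM hMbig hFL dMFL uFL uwFl nvw uvE).
- exact: (deg_X_only_vertex hE hFl hM hMbig hFL dMFL uFL uFl).
Qed.
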